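(* Let $(p_{ij})_{i,j\in\{0,1\}}$ be a transition matrix with all $p_{ij}\in(0,1)$ and $p_{ij}\ne\tfrac12$ for some $(i,j)$, and for $i\in\{0,1\}$, $n\in\mathbb N_0$ let $I_n^i$ be binomially $B(n,p_{i0})$ distributed. Let $(a_i(n))_{n\in\mathbb N_0}$, $(\varepsilon_i(n))_{n\in\mathbb N_0}$, $i\in\{0,1\}$, be real sequences satisfying $$a_i(n)=p_{i0}\mathbb E[a_0(I_n^i)]+p_{i1}\mathbb E[a_1(n-I_n^i)]+\varepsilon_i(n),\qquad i\in\{0,1\},\ n\in\mathbb N.$$ If $\varepsilon_i(n)=c_i+O(n^{-\alpha})$ for constants $c_i\in\mathbb R$, some $\alpha>0$ and both $i$, then as $n\to\infty$ $$a_i(n)=\frac{\pi_0c_0+\pi_1c_1}{H}\log n+O(1),\qquad i\in\{0,1\}.$$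
   Context: $\pi_0=p_{10}/(p_{01}+p_{10})$, $\pi_1=p_{01}/(p_{01}+p_{10})$, $H_i=-\sum_{j}p_{ij}\log p_{ij}$, $H=\pi_0H_0+\pi_1H_1$. *)

From Stdlib Require Import Reals Lra.
Open Scope R_scope.

Definition Ebin (n : nat) (q : R) (f : nat -> R) : R :=
  sum_f_R0 (fun k => C n k * q ^ k * (1 - q) ^ (n - k) * f k) n.

(* Stationary distribution of the two-state chain with transition matrix p
   (indices 0,1): pi_0 = p10/(p01+p10), pi_1 = p01/(p01+p10). *)
Definition pi0 (p : nat -> nat -> R) : R := p 1%nat 0%nat / (p 0%nat 1%nat + p 1%nat 0%nat).
Definition pi1 (p : nat -> nat -> R) : R := p 0%nat 1%nat / (p 0%nat 1%nat + p 1%nat 0%nat).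

Definition Hrow (p : nat -> nat -> R) (i : nat) : R :=
  - (p i 0%nat * ln (p i 0%nat) + p i 1%nat * ln (p i 1%nat)).

Definition Hent (p : nat -> nat -> R) : R := pi0 p * Hrow p 0%nat + pi1 p * Hrow p 1%nat.

From Stdlib Require Import Reals Lra Lia Arith.
Open Scope R_scope.

(* A comparison argument. On the right-hand side [mix] of the recurrence, [ln n] satisfies
   [mix ln = ln n - H_i + O(ln n / n)] (second-order expansion of [ln] around the binomial
   means [n p_ij]), so [L ln n + h_i] is an approximate solution as soon as [h] solves the
   Poisson equation [P h - h = L H - c]; that equation is solvable exactly when
   [L = (pi_0 c_0 + pi_1 c_1) / H]. Subtracting [B (n + 1)^(-g)] makes it a supersolution, and
   a maximum principle for [mix] (some binomial mass always falls below [n]) bounds [a] from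
   above. The same argument applied to [-a] gives the lower bound. *)

(* [ln] is total, with the junk value [0] on nonpositive arguments. *)
Lemma ln_0 : ln 0 = 0.
Proof.
  cbv beta delta [ln]; destruct (Rlt_dec 0 0) as [h | h];
    [exfalso; exact (Rlt_irrefl 0 h) | reflexivity].
Qed.

Lemma ln_le x y : 0 < x -> x <= y -> ln x <= ln y.
Proof. intros Hx [Hlt | ->]; [left; apply ln_increasing |]; lra. Qed.

Lemma ln_nonneg x : 1 <= x -> 0 <= ln x.
Proof. intros; rewrite <- ln_1; apply ln_le; lra. Qed.

Lemma ln_neg x : 0 < x < 1 -> ln x < 0.
Proof. intros; rewrite <- ln_1; apply ln_increasing; lra. Qed.

Lemma ln_div x y : 0 < x -> 0 < y -> ln (x / y) = ln x - ln y.
Proof.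
  intros Hx Hy; unfold Rdiv.
  rewrite ln_mult, ln_Rinv by (try apply Rinv_0_lt_compat; lra); ring.
Qed.

Lemma ln_le_sub_1 x : 0 < x -> ln x <= x - 1.
Proof. intros Hx; pose proof (exp_ineq1_le (ln x)); rewrite exp_ln in *; lra. Qed.

Lemma ln_INR_nonneg k : 0 <= ln (INR k).
Proof.
  destruct k as [|k]; [simpl; rewrite ln_0; lra |].
  apply ln_nonneg; rewrite S_INR; pose proof (pos_INR k); lra.
Qed.

Lemma exp_le x y : x <= y -> exp x <= exp y.
Proof. intros [Hlt | ->]; [left; apply exp_increasing |]; lra. Qed.

Lemma ln_INR_le_quadratic (k : nat) m : 1 <= m ->
  ln (INR k) <= ln m + (INR k - m) / m + (INR k - m) ^ 2 / m ^ 2.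
Proof.
  intros Hm; pose proof (ln_nonneg m Hm).
  replace ((INR k - m) ^ 2 / m ^ 2) with (((INR k - m) / m) ^ 2) by (field; lra).
  destruct k as [|k].
  - simpl INR; rewrite ln_0.
    replace ((0 - m) / m) with (-1) by (field; lra); lra.
  - set (x := INR (S k)); assert (0 < x) by (apply lt_0_INR; lia).
    replace ((x - m) / m) with (x / m - 1) by (field; lra).
    replace (ln x) with (ln m + ln (x / m)) by (rewrite ln_div; lra).
    pose proof (ln_le_sub_1 (x / m) ltac:(apply Rdiv_lt_0_compat; lra)).
    pose proof (pow2_ge_0 (x / m - 1)); lra.
Qed.

Lemma ln_INR_ge_quadratic (k : nat) m : 1 <= m ->
  ln m + (INR k - m) / m - (2 + 4 * ln m) * (INR k - m) ^ 2 / m ^ 2 <= ln (INR k).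
Proof.
  intros Hm; pose proof (ln_nonneg m Hm).
  replace ((2 + 4 * ln m) * (INR k - m) ^ 2 / m ^ 2)
    with ((2 + 4 * ln m) * ((INR k - m) / m) ^ 2) by (field; lra).
  pose proof (pos_INR k); set (x := INR k) in *; set (t := (x - m) / m).
  assert (Hx : x = m * (1 + t)) by (unfold t; field; lra).
  assert (Ht : -1 <= t) by (rewrite Hx in *; nra).
  pose proof (pow2_ge_0 t).
  destruct (Rle_lt_dec (-1/2) t) as [Hclose | Hfar].
  - (* [ln (1 / (1 + t)) <= 1 / (1 + t) - 1] and [t / (1 + t) >= t - 2 t^2] for [t >= -1/2]. *)
    assert (0 < x) by (rewrite Hx; nra).
    replace (ln x) with (ln m - ln (/ (1 + t))) by (rewrite ln_Rinv, Hx, ln_mult by lra; ring).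
    pose proof (ln_le_sub_1 (/ (1 + t)) ltac:(apply Rinv_0_lt_compat; lra)).
    assert (t - 2 * t ^ 2 <= 1 - / (1 + t)).
    { replace (1 - / (1 + t)) with (t / (1 + t)) by (field; lra).
      apply Rmult_le_reg_r with (1 + t); [lra |].
      replace (t / (1 + t) * (1 + t)) with t by (field; lra); nra. }
    assert (0 <= 4 * ln m * t ^ 2) by (apply Rmult_le_pos; lra); lra.
  - pose proof (ln_INR_nonneg k) as Hlnx; fold x in Hlnx.
    assert (1 / 4 <= t ^ 2) by nra.
    assert ((2 + 4 * ln m) * (1 / 4) <= (2 + 4 * ln m) * t ^ 2)
      by (apply Rmult_le_compat_l; lra); lra.
Qed.

Lemma Rpower_pos x y : 0 < Rpower x y.
Proof. apply exp_pos. Qed.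

Lemma Rpower_opp_antitone x y g : 0 <= g -> 0 < x <= y -> Rpower y (- g) <= Rpower x (- g).
Proof.
  intros Hg Hxy; rewrite !Rpower_Ropp.
  apply Rinv_le_contravar; [apply Rpower_pos | apply Rle_Rpower_l; lra].
Qed.

Lemma Rpower_opp_gt_1 x g : 0 < x < 1 -> 0 < g -> 1 < Rpower x (- g).
Proof.
  intros Hx Hg; unfold Rpower; rewrite <- exp_0; apply exp_increasing.
  pose proof (ln_neg x Hx); nra.
Qed.

Lemma Rpower_opp_above_tangent y z g : 0 < y -> 0 < z -> 0 <= g ->
  Rpower z (- g) * (1 - g * (y - z) / z) <= Rpower y (- g).
Proof.
  intros Hy Hz Hg.
  assert (Hyz : Rpower y (- g) = Rpower z (- g) * Rpower (y / z) (- g)).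
  { rewrite Rpower_mult_distr by (try apply Rdiv_lt_0_compat; lra).
    f_equal; field; lra. }
  rewrite Hyz.
  apply Rmult_le_compat_l; [left; apply Rpower_pos |].
  unfold Rpower; eapply Rle_trans; [| apply exp_ineq1_le].
  pose proof (ln_le_sub_1 (y / z) ltac:(apply Rdiv_lt_0_compat; lra)).
  replace (g * (y - z) / z) with (g * (y / z - 1)) by (field; lra); nra.
Qed.

Lemma Rpower_opp_le_succ x alpha g : 2 <= x -> 0 <= g <= alpha / 2 ->
  Rpower x (- alpha) <= Rpower (x + 1) (- g).
Proof.
  intros Hx Hg; unfold Rpower; apply exp_le.
  assert (ln (x + 1) <= 2 * ln x).
  { replace (2 * ln x) with (ln (x * x)) by (rewrite ln_mult; lra). apply ln_le; nra. }
  pose proof (ln_nonneg (x + 1) ltac:(lra)); nra.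
Qed.

Lemma ln_error_le_Rpower x g : 1 <= x -> 0 < g <= 1 / 2 ->
  2 * (2 + 4 * ln x) / x <= 40 * Rpower (x + 1) (- g).
Proof.
  intros Hx Hg; set (u := sqrt (x + 1)).
  assert (Hu2 : u * u = x + 1) by (apply sqrt_sqrt; lra).
  assert (Hu : 1 <= u) by (assert (0 <= u) by apply sqrt_pos; nra).
  assert (Hinv : / u <= Rpower (x + 1) (- g)).
  { unfold u; rewrite <- Rpower_sqrt, <- Rpower_Ropp by lra.
    apply Rle_Rpower; lra. }
  assert (Hln : ln x <= 2 * (u - 1)).
  { assert (Hlnu : ln x <= ln (u * u)) by (apply ln_le; lra).
    rewrite ln_mult in Hlnu by lra; pose proof (ln_le_sub_1 u ltac:(lra)); lra. }
  apply Rle_trans with (40 / u); [| unfold Rdiv; lra].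
  apply Rmult_le_reg_r with (x * u); [nra |].
  replace (2 * (2 + 4 * ln x) / x * (x * u)) with (2 * (2 + 4 * ln x) * u) by (field; lra).
  replace (40 / u * (x * u)) with (40 * x) by (field; lra); nra.
Qed.

Lemma C_n_0 n : C n 0 = 1.
Proof.
  unfold C; rewrite Nat.sub_0_r; simpl fact; rewrite Rmult_1_l.
  field; apply INR_fact_neq_0.
Qed.

Lemma C_n_n n : C n n = 1.
Proof.
  unfold C; rewrite Nat.sub_diag; simpl fact; rewrite Rmult_1_r.
  field; apply INR_fact_neq_0.
Qed.

Lemma C_nonneg n k : 0 <= C n k.
Proof.
  unfold C; apply Rmult_le_pos; [apply pos_INR |].
  apply Rlt_le, Rinv_0_lt_compat, Rmult_lt_0_compat; apply INR_fact_lt_0.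
Qed.

Lemma sum_C_S n (g : nat -> R) :
  sum_f_R0 (fun k => C (S n) k * g k) (S n) =
  sum_f_R0 (fun k => C n k * (g k + g (S k))) n.
Proof.
  rewrite decomp_sum by lia; simpl pred.
  destruct n as [|m].
  - simpl; rewrite !C_n_0, (C_n_n 1); ring.
  - rewrite tech5.
    rewrite (sum_eq (fun i => C (S (S m)) (S i) * g (S i))
                    (fun i => C (S m) i * g (S i) + C (S m) (S i) * g (S i)))
      by (intros i Hi; rewrite <- pascal by lia; ring).
    rewrite (sum_eq (fun k => C (S m) k * (g k + g (S k)))
                    (fun k => C (S m) k * g k + C (S m) k * g (S k))) by (intros; ring).
    rewrite !plus_sum, (decomp_sum (fun k => C (S m) k * g k)) by lia; simpl pred.
    rewrite (tech5 (fun k => C (S m) k * g (S k))), !C_n_0, !C_n_n; ring.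
Qed.

Lemma binomial_weight_nonneg n k q : 0 <= q <= 1 -> 0 <= C n k * q ^ k * (1 - q) ^ (n - k).
Proof.
  intros Hq; apply Rmult_le_pos; [apply Rmult_le_pos; [apply C_nonneg |] |];
    apply pow_le; lra.
Qed.

Lemma Ebin_ext n q f g : (forall k, (k <= n)%nat -> f k = g k) -> Ebin n q f = Ebin n q g.
Proof. intros Hfg; unfold Ebin; apply sum_eq; intros k Hk; rewrite Hfg by lia; ring. Qed.

Lemma Ebin_le n q f g : 0 <= q <= 1 ->
  (forall k, (k <= n)%nat -> f k <= g k) -> Ebin n q f <= Ebin n q g.
Proof.
  intros Hq Hfg; unfold Ebin; apply sum_Rle; intros k Hk.
  apply Rmult_le_compat_l; [apply binomial_weight_nonneg; lra | apply Hfg; lia].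
Qed.

Lemma Ebin_plus n q f g : Ebin n q (fun k => f k + g k) = Ebin n q f + Ebin n q g.
Proof. unfold Ebin; rewrite <- plus_sum; apply sum_eq; intros; ring. Qed.

Lemma Ebin_scal n q x f : Ebin n q (fun k => x * f k) = x * Ebin n q f.
Proof. unfold Ebin; rewrite scal_sum; apply sum_eq; intros; ring. Qed.

Lemma Ebin_S n q f : Ebin (S n) q f = q * Ebin n q (fun k => f (S k)) + (1 - q) * Ebin n q f.
Proof.
  unfold Ebin.
  rewrite (sum_eq (fun k => C (S n) k * q ^ k * (1 - q) ^ (S n - k) * f k)
                  (fun k => C (S n) k * (q ^ k * (1 - q) ^ (S n - k) * f k))) by (intros; ring).
  rewrite sum_C_S, !scal_sum, <- plus_sum; apply sum_eq; intros k Hk.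
  replace (S n - k)%nat with (S (n - k)) by lia; simpl; ring.
Qed.

Lemma Ebin_quadratic n q a b c :
  Ebin n q (fun k => a + b * INR k + c * INR k ^ 2) =
  a + b * (INR n * q) + c * (INR n * q * (1 - q) + (INR n * q) ^ 2).
Proof.
  revert a b c; induction n as [|n IH]; intros a b c.
  - unfold Ebin; simpl; rewrite C_n_0; ring.
  - rewrite Ebin_S, (Ebin_ext n q _ (fun k => (a + b + c) + (b + 2 * c) * INR k + c * INR k ^ 2))
      by (intros; rewrite S_INR; ring).
    rewrite !IH, S_INR; ring.
Qed.

Lemma Ebin_centered n q a b c :
  Ebin n q (fun k => a + b * (INR k - INR n * q) + c * (INR k - INR n * q) ^ 2) =
  a + c * (INR n * q * (1 - q)).
Proof.
  set (m := INR n * q).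
  rewrite (Ebin_ext n q _ (fun k => (a - b * m + c * m ^ 2) + (b - 2 * c * m) * INR k + c * INR k ^ 2))
    by (intros; ring).
  rewrite Ebin_quadratic; unfold m; ring.
Qed.

Lemma Ebin_const n q x : Ebin n q (fun _ => x) = x.
Proof.
  rewrite (Ebin_ext n q _ (fun k => x + 0 * (INR k - INR n * q) + 0 * (INR k - INR n * q) ^ 2))
    by (intros; ring).
  rewrite Ebin_centered; ring.
Qed.

Lemma Ebin_centered_le n q f a b c : 0 <= q <= 1 ->
  (forall k, (k <= n)%nat -> f k <= a + b * (INR k - INR n * q) + c * (INR k - INR n * q) ^ 2) ->
  Ebin n q f <= a + c * (INR n * q * (1 - q)).
Proof. intros Hq Hf; rewrite <- (Ebin_centered n q a b c); apply Ebin_le; auto. Qed.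

Lemma Ebin_centered_ge n q f a b c : 0 <= q <= 1 ->
  (forall k, (k <= n)%nat -> a + b * (INR k - INR n * q) + c * (INR k - INR n * q) ^ 2 <= f k) ->
  a + c * (INR n * q * (1 - q)) <= Ebin n q f.
Proof. intros Hq Hf; rewrite <- (Ebin_centered n q a b c); apply Ebin_le; auto. Qed.

Lemma Ebin_reflect n q f : Ebin n q (fun k => f (n - k)%nat) = Ebin n (1 - q) f.
Proof.
  revert f; induction n as [|n IH]; intros f.
  - unfold Ebin; simpl; ring.
  - rewrite !Ebin_S; change (fun k => f (S n - S k)%nat) with (fun k => f (n - k)%nat).
    rewrite IH.
    rewrite (Ebin_ext n q (fun k => f (S n - k)%nat) (fun k => f (S (n - k))))
      by (intros k Hk; f_equal; lia).
    rewrite (IH (fun j => f (S j))); ring.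
Qed.

Lemma Ebin_le_last n q f : 0 <= q <= 1 ->
  (forall k, (k < n)%nat -> f k <= 0) -> Ebin n q f <= q ^ n * f n.
Proof.
  intros Hq Hf; unfold Ebin; destruct n as [|n]; [simpl; rewrite C_n_0; lra |].
  rewrite tech5, C_n_n, Nat.sub_diag.
  enough (sum_f_R0 (fun k => C (S n) k * q ^ k * (1 - q) ^ (S n - k) * f k) n <= 0) by lra.
  apply Rle_trans with (sum_f_R0 (fun _ => 0) n); [| rewrite sum_cte; lra].
  apply sum_Rle; intros k Hk.
  pose proof (binomial_weight_nonneg (S n) k q Hq).
  pose proof (Hf k ltac:(lia)); nra.
Qed.

Lemma Ebin_ln_error n q : 0 < q < 1 -> 1 <= INR n * q ->
  Rabs (q * (Ebin n q (fun k => ln (INR k)) - ln (INR n * q))) <= (2 + 4 * ln (INR n)) / INR n.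
Proof.
  intros Hq Hm; set (m := INR n * q) in *.
  assert (Hn : 1 <= INR n) by (unfold m in Hm; nra).
  pose proof (ln_nonneg m Hm).
  assert (ln m <= ln (INR n)) by (apply ln_le; unfold m; nra).
  (* Second-order bounds on [ln] around [m]; the quadratic term integrates to the variance
     [n q (1 - q)]. *)
  assert (Hup : Ebin n q (fun k => ln (INR k)) <= ln m + / m ^ 2 * (m * (1 - q))).
  { apply Ebin_centered_le with (b := / m); [lra |]; intros k _.
    eapply Rle_trans; [apply (ln_INR_le_quadratic k m Hm) |]; right; fold m; field; lra. }
  assert (Hlo : ln m + - (2 + 4 * ln m) / m ^ 2 * (m * (1 - q)) <= Ebin n q (fun k => ln (INR k))).
  { apply Ebin_centered_ge with (b := / m); [lra |]; intros k _.
    eapply Rle_trans; [| apply (ln_INR_ge_quadratic k m Hm)]; right; fold m; field; lra. }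
  replace (/ m ^ 2 * (m * (1 - q))) with ((1 - q) / INR n / q) in Hup by (unfold m; field; lra).
  replace (- (2 + 4 * ln m) / m ^ 2 * (m * (1 - q))) with (- ((2 + 4 * ln m) * (1 - q) / INR n / q))
    in Hlo by (unfold m; field; lra).
  apply Rabs_le; split.
  - apply Rle_trans with (- ((2 + 4 * ln m) * (1 - q) / INR n)).
    + apply Ropp_le_contravar; unfold Rdiv; apply Rmult_le_compat_r;
        [left; apply Rinv_0_lt_compat; lra | nra].
    + replace (- ((2 + 4 * ln m) * (1 - q) / INR n))
        with (q * - ((2 + 4 * ln m) * (1 - q) / INR n / q)) by (field; lra).
      apply Rmult_le_compat_l; lra.
  - apply Rle_trans with ((1 - q) / INR n).
    + replace ((1 - q) / INR n) with (q * ((1 - q) / INR n / q)) by (field; lra).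
      apply Rmult_le_compat_l; lra.
    + unfold Rdiv; apply Rmult_le_compat_r; [left; apply Rinv_0_lt_compat |]; lra.
Qed.

Lemma Ebin_Rpower_ge n q g : (1 <= n)%nat -> 0 < q < 1 -> 0 <= g ->
  Rpower ((1 + q) / 2) (- g) * Rpower (INR n + 1) (- g) <=
  Ebin n q (fun k => Rpower (INR k + 1) (- g)).
Proof.
  intros Hn Hq Hg; set (m := INR n * q).
  assert (H1n : 1 <= INR n) by (apply (le_INR 1); lia).
  assert (0 <= m) by (unfold m; nra).
  (* Jensen for the convex [t ^ (- g)], via its tangent at [m + 1]. *)
  apply Rle_trans with (Rpower (m + 1) (- g)).
  - rewrite Rpower_mult_distr by lra; apply Rpower_opp_antitone; [lra |]; unfold m; nra.
  - rewrite <- (Rplus_0_r (Rpower (m + 1) (- g))), <- (Rmult_0_l (INR n * q * (1 - q))).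
    apply Ebin_centered_ge with (b := - g * Rpower (m + 1) (- g) / (m + 1)); [lra |].
    intros k _; fold m; pose proof (pos_INR k).
    eapply Rle_trans; [| apply (Rpower_opp_above_tangent (INR k + 1) (m + 1) g); lra].
    right; field; lra.
Qed.

Lemma finite_upper_bound (f : nat -> nat -> R) (N : nat) :
  exists A, forall j n, (j <= 1)%nat -> (n < N)%nat -> f j n <= A.
Proof.
  induction N as [|N [A HA]]; [exists 0; intros; lia |].
  exists (Rmax A (Rmax (f 0%nat N) (f 1%nat N))); intros j n Hj Hn.
  destruct (Nat.eq_dec n N) as [-> | Hne].
  - apply Rle_trans with (Rmax (f 0%nat N) (f 1%nat N)); [| apply Rmax_r].
    destruct (proj1 (Nat.le_1_r j) Hj) as [-> | ->]; [apply Rmax_l | apply Rmax_r].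
  - apply Rle_trans with A; [apply HA; lia | apply Rmax_l].
Qed.

Section TwoStateMixture.

Variable p : nat -> nat -> R.
Hypothesis p_range : forall i j, (i <= 1)%nat -> (j <= 1)%nat -> 0 < p i j < 1.
Hypothesis p_row_sum : forall i, (i <= 1)%nat -> p i 0%nat + p i 1%nat = 1.

(* Right-hand side of the recurrence in state [i], with [n - I] for [I ~ B(n, p_i0)] rewritten
   as a [B(n, p_i1)] variable (see [mix_reflect]). *)
Definition mix (f : nat -> nat -> R) (i n : nat) : R :=
  p i 0%nat * Ebin n (p i 0%nat) (f 0%nat) + p i 1%nat * Ebin n (p i 1%nat) (f 1%nat).

Lemma mix_reflect f i n : (i <= 1)%nat ->
  p i 0%nat * Ebin n (p i 0%nat) (fun k => f 0%nat k)
  + p i 1%nat * Ebin n (p i 0%nat) (fun k => f 1%nat (n - k)%nat) = mix f i n.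
Proof.
  intros Hi; unfold mix; rewrite Ebin_reflect.
  replace (1 - p i 0%nat) with (p i 1%nat) by (pose proof (p_row_sum i Hi); lra); reflexivity.
Qed.

Lemma mix_ext f g i n : (forall j k, f j k = g j k) -> mix f i n = mix g i n.
Proof. intros Hfg; unfold mix; rewrite !(Ebin_ext n _ (f _) (g _)) by auto; reflexivity. Qed.

Lemma mix_lin x y f g (h : nat -> R) i n :
  mix (fun j k => x * f j k + y * g j k + h j) i n =
  x * mix f i n + y * mix g i n + (p i 0%nat * h 0%nat + p i 1%nat * h 1%nat).
Proof. unfold mix; rewrite !Ebin_plus, !Ebin_scal, !Ebin_const; ring. Qed.

Lemma mix_opp f i n : mix (fun j k => - f j k) i n = - mix f i n.
Proof.
  rewrite (mix_ext _ (fun j k => (-1) * f j k + 0 * f j k + 0)) by (intros; ring).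
  rewrite mix_lin; ring.
Qed.

Lemma mix_le_last d i n : (i <= 1)%nat ->
  (forall j k, (j <= 1)%nat -> (k < n)%nat -> d j k <= 0) ->
  mix d i n <= p i 0%nat ^ S n * d 0%nat n + p i 1%nat ^ S n * d 1%nat n.
Proof.
  intros Hi Hd; unfold mix; rewrite <- !tech_pow_Rmult, !Rmult_assoc.
  pose proof (p_range i 0%nat Hi ltac:(lia)); pose proof (p_range i 1%nat Hi ltac:(lia)).
  apply Rplus_le_compat; apply Rmult_le_compat_l; try lra;
    apply Ebin_le_last; try lra; intros; apply Hd; lia.
Qed.

(* Since some mass escapes to smaller arguments, the weights of [d j n] sum to less than one,
   so [d] cannot first become positive at some [n >= N]. *)
Lemma mix_max_principle (d : nat -> nat -> R) N : (1 <= N)%nat ->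
  (forall i n, (i <= 1)%nat -> (n < N)%nat -> d i n <= 0) ->
  (forall i n, (i <= 1)%nat -> (N <= n)%nat -> d i n <= mix d i n) ->
  forall i n, (i <= 1)%nat -> d i n <= 0.
Proof.
  intros HN Hinit Hsub i n; revert i.
  induction n as [n IH] using lt_wf_ind; intros i Hi.
  destruct (Nat.lt_ge_cases n N) as [Hlt | Hge]; [auto |].
  assert (Hweights : forall j, (j <= 1)%nat ->
    d j n <= p j 0%nat ^ S n * d 0%nat n + p j 1%nat ^ S n * d 1%nat n /\
    p j 0%nat ^ S n + p j 1%nat ^ S n < 1).
  { intros j Hj; split.
    - eapply Rle_trans; [apply Hsub; auto | apply mix_le_last; auto].
    - assert (Hpow : forall l, (l <= 1)%nat -> p j l ^ S n < p j l).
      { intros l Hl; pose proof (p_range j l Hj Hl) as Hp; simpl.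
        pose proof (pow_lt_1_compat (p j l) n ltac:(lra) ltac:(lia)); nra. }
      pose proof (Hpow 0%nat ltac:(lia)); pose proof (Hpow 1%nat ltac:(lia)).
      pose proof (p_row_sum j Hj); lra. }
  set (D := Rmax (d 0%nat n) (d 1%nat n)).
  assert (HD : D <= 0).
  { apply Rnot_lt_le; intros HDpos.
    assert (Hlt : forall j, (j <= 1)%nat -> d j n < D).
    { intros j Hj; destruct (Hweights j Hj) as [Hd Hw].
      pose proof (Rmax_l (d 0%nat n) (d 1%nat n)); pose proof (Rmax_r (d 0%nat n) (d 1%nat n)).
      pose proof (pow_le (p j 0%nat) (S n) ltac:(pose proof (p_range j 0%nat Hj ltac:(lia)); lra)).
      pose proof (pow_le (p j 1%nat) (S n) ltac:(pose proof (p_range j 1%nat Hj ltac:(lia)); lra)).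
      unfold D in *; nra. }
    apply (Rlt_irrefl D); unfold D at 1.
    apply Rmax_lub_lt; apply Hlt; lia. }
  apply Rle_trans with D; [| exact HD].
  destruct (proj1 (Nat.le_1_r i) Hi) as [-> | ->]; [apply Rmax_l | apply Rmax_r].
Qed.

Lemma mix_ln i n : (i <= 1)%nat -> (forall j, (j <= 1)%nat -> 1 <= INR n * p i j) ->
  Rabs (mix (fun _ k => ln (INR k)) i n - (ln (INR n) - Hrow p i))
    <= 2 * (2 + 4 * ln (INR n)) / INR n.
Proof.
  intros Hi Hn.
  pose proof (p_range i 0%nat Hi ltac:(lia)); pose proof (p_range i 1%nat Hi ltac:(lia)).
  pose proof (Hn 0%nat ltac:(lia)); pose proof (Hn 1%nat ltac:(lia)).
  assert (0 < INR n) by nra.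
  assert (Hsplit : mix (fun _ k => ln (INR k)) i n - (ln (INR n) - Hrow p i) =
    p i 0%nat * (Ebin n (p i 0%nat) (fun k => ln (INR k)) - ln (INR n * p i 0%nat))
    + p i 1%nat * (Ebin n (p i 1%nat) (fun k => ln (INR k)) - ln (INR n * p i 1%nat))).
  { rewrite <- (Rmult_1_l (ln (INR n))), <- (p_row_sum i Hi).
    unfold mix, Hrow; rewrite !ln_mult by lra; ring. }
  rewrite Hsplit; eapply Rle_trans; [apply Rabs_triang |].
  replace (2 * (2 + 4 * ln (INR n)) / INR n)
    with ((2 + 4 * ln (INR n)) / INR n + (2 + 4 * ln (INR n)) / INR n) by (field; lra).
  apply Rplus_le_compat; apply Ebin_ln_error; auto.
Qed.

Lemma mix_Rpower_ge i n g s : (i <= 1)%nat -> (1 <= n)%nat -> 0 <= g ->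
  (forall j, (j <= 1)%nat -> p i j <= s) ->
  Rpower ((1 + s) / 2) (- g) * Rpower (INR n + 1) (- g)
    <= mix (fun _ k => Rpower (INR k + 1) (- g)) i n.
Proof.
  intros Hi Hn Hg Hs.
  assert (Hterm : forall j, (j <= 1)%nat ->
    Rpower ((1 + s) / 2) (- g) * Rpower (INR n + 1) (- g)
      <= Ebin n (p i j) (fun k => Rpower (INR k + 1) (- g))).
  { intros j Hj; pose proof (p_range i j Hi Hj); pose proof (Hs j Hj).
    eapply Rle_trans; [| apply Ebin_Rpower_ge; auto].
    apply Rmult_le_compat_r; [left; apply Rpower_pos |].
    apply Rpower_opp_antitone; lra. }
  pose proof (Hterm 0%nat ltac:(lia)); pose proof (Hterm 1%nat ltac:(lia)).
  pose proof (p_range i 0%nat Hi ltac:(lia)); pose proof (p_range i 1%nat Hi ltac:(lia)).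
  pose proof (p_row_sum i Hi); unfold mix; nra.
Qed.

Lemma Hrow_pos i : (i <= 1)%nat -> 0 < Hrow p i.
Proof.
  intros Hi; unfold Hrow.
  assert (Hterm : forall j, (j <= 1)%nat -> p i j * ln (p i j) < 0).
  { intros j Hj; pose proof (p_range i j Hi Hj).
    apply Rmult_pos_neg; [lra | apply ln_neg; lra]. }
  pose proof (Hterm 0%nat ltac:(lia)); pose proof (Hterm 1%nat ltac:(lia)); lra.
Qed.

Lemma Hent_pos : 0 < Hent p.
Proof.
  pose proof (p_range 0%nat 1%nat ltac:(lia) ltac:(lia));
    pose proof (p_range 1%nat 0%nat ltac:(lia) ltac:(lia)).
  pose proof (Hrow_pos 0%nat ltac:(lia)); pose proof (Hrow_pos 1%nat ltac:(lia)).
  unfold Hent, pi0, pi1.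
  apply Rplus_lt_0_compat; apply Rmult_lt_0_compat; try apply Rdiv_lt_0_compat; lra.
Qed.

Lemma two_state_poisson (r : nat -> R) : pi0 p * r 0%nat + pi1 p * r 1%nat = 0 ->
  exists h : nat -> R, forall i, (i <= 1)%nat ->
    p i 0%nat * h 0%nat + p i 1%nat * h 1%nat - h i = r i.
Proof.
  intros Hmean.
  pose proof (p_range 0%nat 1%nat ltac:(lia) ltac:(lia));
    pose proof (p_range 1%nat 0%nat ltac:(lia) ltac:(lia)).
  pose proof (p_row_sum 0%nat ltac:(lia)); pose proof (p_row_sum 1%nat ltac:(lia)).
  assert (Hbal : p 1%nat 0%nat * r 0%nat + p 0%nat 1%nat * r 1%nat = 0).
  { unfold pi0, pi1 in Hmean.
    replace (p 1%nat 0%nat * r 0%nat + p 0%nat 1%nat * r 1%nat)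
      with ((p 0%nat 1%nat + p 1%nat 0%nat) *
            (p 1%nat 0%nat / (p 0%nat 1%nat + p 1%nat 0%nat) * r 0%nat
             + p 0%nat 1%nat / (p 0%nat 1%nat + p 1%nat 0%nat) * r 1%nat)) by (field; lra).
    rewrite Hmean; ring. }
  exists (fun i => match i with O => - r 0%nat / p 0%nat 1%nat | _ => 0 end).
  intros i Hi; destruct (proj1 (Nat.le_1_r i) Hi) as [-> | ->]; cbn.
  - replace (p 0%nat 0%nat) with (1 - p 0%nat 1%nat) by lra; field; lra.
  - replace (r 1%nat) with (- (p 1%nat 0%nat * r 0%nat) / p 0%nat 1%nat) by (field_simplify_eq; lra).
    field; lra.
Qed.

Lemma entropy_poisson_solution (c : nat -> R) :
  exists h : nat -> R, forall i, (i <= 1)%nat ->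
    p i 0%nat * h 0%nat + p i 1%nat * h 1%nat - h i
      = (pi0 p * c 0%nat + pi1 p * c 1%nat) / Hent p * Hrow p i - c i.
Proof.
  apply two_state_poisson; pose proof Hent_pos.
  unfold Hent in *; field; lra.
Qed.

Lemma entries_bounded_away :
  exists q, 0 < q /\ forall i j, (i <= 1)%nat -> (j <= 1)%nat -> q <= p i j <= 1 - q.
Proof.
  set (pmin := fun i => Rmin (p i 0%nat) (p i 1%nat)).
  exists (Rmin (pmin 0%nat) (pmin 1%nat)); split.
  - unfold pmin; repeat apply Rmin_glb_lt; apply p_range; lia.
  - assert (Hpmin : forall i j, (i <= 1)%nat -> (j <= 1)%nat -> pmin i <= p i j).
    { intros i j _ Hj; unfold pmin.
      destruct (proj1 (Nat.le_1_r j) Hj) as [-> | ->]; [apply Rmin_l | apply Rmin_r]. }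
    assert (Hmin : forall i, (i <= 1)%nat -> Rmin (pmin 0%nat) (pmin 1%nat) <= pmin i).
    { intros i Hi; destruct (proj1 (Nat.le_1_r i) Hi) as [-> | ->]; [apply Rmin_l | apply Rmin_r]. }
    intros i j Hi Hj; pose proof (Hmin i Hi); pose proof (p_row_sum i Hi).
    pose proof (Hpmin i 0%nat Hi ltac:(lia)); pose proof (Hpmin i 1%nat Hi ltac:(lia)).
    destruct (proj1 (Nat.le_1_r j) Hj) as [-> | ->]; lra.
Qed.

Definition barrier (L : R) (h : nat -> R) (B g : R) (j n : nat) : R :=
  L * ln (INR n) + h j - B * Rpower (INR n + 1) (- g).

(* The correction [- B (n + 1)^(-g)] absorbs the [O(ln n / n)] error of [mix_ln] and the
   [O(n^(-alpha))] error of [eps]: [mix] multiplies [(n + 1)^(-g)] by at least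
   [((1 + s) / 2)^(-g) > 1]. *)
Lemma barrier_supersolution L (h c : nat -> R) (eps : nat -> nat -> R) alpha K g s B i n :
  (forall j, (j <= 1)%nat -> p j 0%nat * h 0%nat + p j 1%nat * h 1%nat - h j = L * Hrow p j - c j) ->
  0 < g <= alpha / 2 -> g <= 1 / 2 -> 0 <= K -> 0 <= B ->
  (forall j l, (j <= 1)%nat -> (l <= 1)%nat -> p j l <= s) ->
  40 * Rabs L + K <= B * (Rpower ((1 + s) / 2) (- g) - 1) ->
  (i <= 1)%nat -> (2 <= n)%nat -> (forall j, (j <= 1)%nat -> 1 <= INR n * p i j) ->
  eps i n - c i <= K * Rpower (INR n) (- alpha) ->
  mix (barrier L h B g) i n + eps i n <= barrier L h B g i n.
Proof.
  intros Hpoisson Hg Hg1 HK HB Hs HBK Hi Hn Hnp Heps.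
  assert (H2n : 2 <= INR n) by (apply (le_INR 2); lia).
  set (Phi := Rpower (INR n + 1) (- g)) in *.
  set (r := Rpower ((1 + s) / 2) (- g)) in *.
  assert (HPhi : 0 < Phi) by apply Rpower_pos.
  assert (Hmix : mix (barrier L h B g) i n = L * mix (fun _ k => ln (INR k)) i n
      + (p i 0%nat * h 0%nat + p i 1%nat * h 1%nat) - B * mix (fun _ k => Rpower (INR k + 1) (- g)) i n).
  { rewrite (mix_ext _ (fun j k => L * ln (INR k) + (- B) * Rpower (INR k + 1) (- g) + h j))
      by (intros; unfold barrier; ring).
    rewrite mix_lin; ring. }
  assert (Hln : L * mix (fun _ k => ln (INR k)) i n <= L * (ln (INR n) - Hrow p i) + Rabs L * (40 * Phi)).
  { pose proof (mix_ln i n Hi Hnp); pose proof (ln_error_le_Rpower (INR n) g ltac:(lra) ltac:(lra)) as Herr; fold Phi in Herr.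
    set (e := mix (fun _ k => ln (INR k)) i n - (ln (INR n) - Hrow p i)) in *.
    assert (L * e <= Rabs L * (40 * Phi)).
    { eapply Rle_trans; [apply Rle_abs |]; rewrite Rabs_mult.
      apply Rmult_le_compat_l; [apply Rabs_pos | lra]. }
    unfold e in *; lra. }
  assert (HPhimix : B * (r * Phi) <= B * mix (fun _ k => Rpower (INR k + 1) (- g)) i n).
  { apply Rmult_le_compat_l; [lra |].
    apply mix_Rpower_ge; [auto | lia | lra | intros; apply Hs; auto]. }
  assert (HepsPhi : eps i n - c i <= K * Phi).
  { eapply Rle_trans; [exact Heps |]; apply Rmult_le_compat_l; [lra |].
    apply Rpower_opp_le_succ; lra. }
  pose proof (Hpoisson i Hi).
  assert ((40 * Rabs L + K) * Phi <= B * (r - 1) * Phi) by (apply Rmult_le_compat_r; lra).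
  rewrite Hmix; unfold barrier; fold Phi; nra.
Qed.

Lemma recurrence_upper_bound L (h c : nat -> R) (a eps : nat -> nat -> R) alpha :
  (forall j, (j <= 1)%nat -> p j 0%nat * h 0%nat + p j 1%nat * h 1%nat - h j = L * Hrow p j - c j) ->
  (forall i n, (i <= 1)%nat -> (1 <= n)%nat -> a i n = mix a i n + eps i n) ->
  0 < alpha ->
  (forall i, (i <= 1)%nat -> exists M N, forall n, (N <= n)%nat ->
     Rabs (eps i n - c i) <= M * Rpower (INR n) (- alpha)) ->
  exists A, forall i n, (i <= 1)%nat -> a i n <= L * ln (INR n) + A.
Proof.
  intros Hpoisson Hrec Halpha Heps.
  destruct (Heps 0%nat ltac:(lia)) as [M0 [N0 HM0]], (Heps 1%nat ltac:(lia)) as [M1 [N1 HM1]].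
  set (K := Rabs M0 + Rabs M1).
  assert (HK0 : 0 <= K) by (unfold K; pose proof (Rabs_pos M0); pose proof (Rabs_pos M1); lra).
  assert (HK : forall i n, (i <= 1)%nat -> (Nat.max N0 N1 <= n)%nat ->
                 eps i n - c i <= K * Rpower (INR n) (- alpha)).
  { intros i n Hi Hn.
    assert (HM : exists M, M <= K /\ Rabs (eps i n - c i) <= M * Rpower (INR n) (- alpha)).
    { pose proof (Rle_abs M0); pose proof (Rle_abs M1).
      pose proof (Rabs_pos M0); pose proof (Rabs_pos M1).
      destruct (proj1 (Nat.le_1_r i) Hi) as [-> | ->];
        [exists M0; split; [unfold K; lra | apply HM0; lia]
        | exists M1; split; [unfold K; lra | apply HM1; lia]]. }
    destruct HM as [M [HMK HM]]; pose proof (Rle_abs (eps i n - c i)).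
    apply Rle_trans with (M * Rpower (INR n) (- alpha)); [lra |].
    apply Rmult_le_compat_r; [left; apply Rpower_pos | exact HMK]. }
  destruct (entries_bounded_away) as [q [Hq Hpq]].
  set (g := Rmin (alpha / 2) (1 / 2)).
  assert (Hg : 0 < g <= alpha / 2 /\ g <= 1 / 2)
    by (unfold g; repeat split; [apply Rmin_glb_lt; lra | apply Rmin_l | apply Rmin_r]).
  assert (Hq1 : q <= 1 / 2) by (pose proof (Hpq 0%nat 0%nat ltac:(lia) ltac:(lia)); lra).
  set (r := Rpower ((1 + (1 - q)) / 2) (- g)).
  assert (Hr : 1 < r) by (apply Rpower_opp_gt_1; lra).
  set (B := (40 * Rabs L + K) / (r - 1)).
  assert (HB : 0 <= B) by (apply Rmult_le_pos; [pose proof (Rabs_pos L); lra |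
                                                left; apply Rinv_0_lt_compat; lra]).
  assert (HBr : 40 * Rabs L + K <= B * (r - 1)) by (unfold B; right; field; lra).
  destruct (INR_unbounded (/ q)) as [n1 Hn1].
  set (N := Nat.max (Nat.max (Nat.max N0 N1) 2) n1).
  destruct (finite_upper_bound (fun j n => a j n - barrier L h B g j n) N) as [A HA].
  set (d := fun j n => a j n - barrier L h B g j n - A).
  assert (Hd : forall i n, (i <= 1)%nat -> d i n <= 0).
  { apply (mix_max_principle d N); [lia | intros i n Hi Hn; specialize (HA i n Hi Hn); unfold d; lra |].
    intros i n Hi Hn.
    assert (HnN : INR n1 <= INR n) by (apply le_INR; lia).
    assert (Hnp : forall j, (j <= 1)%nat -> 1 <= INR n * p i j).
    { intros j Hj; pose proof (Hpq i j Hi Hj).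
      assert (/ q * q = 1) by (field; lra).
      assert (INR n * q <= INR n * p i j) by (apply Rmult_le_compat_l; [apply pos_INR | lra]).
      nra. }
    pose proof (barrier_supersolution L h c eps alpha K g (1 - q) B i n Hpoisson
      (proj1 Hg) (proj2 Hg) HK0 HB ltac:(intros; apply Hpq; auto) HBr
      Hi ltac:(lia) Hnp (HK i n Hi ltac:(lia))) as Hsuper.
    rewrite (mix_ext _ (fun j k => 1 * a j k + (-1) * barrier L h B g j k + (- A)))
      by (intros; unfold d; ring).
    rewrite mix_lin.
    replace (p i 0%nat * - A + p i 1%nat * - A) with ((p i 0%nat + p i 1%nat) * - A) by ring.
    rewrite (p_row_sum i Hi); unfold d; rewrite (Hrec i n Hi ltac:(lia)); lra. }
  exists (A + Rabs (h 0%nat) + Rabs (h 1%nat)); intros i n Hi.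
  specialize (Hd i n Hi); unfold d, barrier in Hd.
  assert (0 <= B * Rpower (INR n + 1) (- g)) by (apply Rmult_le_pos; [lra | left; apply Rpower_pos]).
  assert (h i <= Rabs (h 0%nat) + Rabs (h 1%nat)).
  { pose proof (Rabs_pos (h 0%nat)); pose proof (Rabs_pos (h 1%nat)).
    destruct (proj1 (Nat.le_1_r i) Hi) as [-> | ->];
      [pose proof (Rle_abs (h 0%nat)) | pose proof (Rle_abs (h 1%nat))]; lra. }
  lra.
Qed.

End TwoStateMixture.

Theorem lemma4p4
  (p : nat -> nat -> R) (a eps : nat -> nat -> R) (c : nat -> R) (alpha : R) :
  (* transition matrix with all entries in (0,1) *)
  (forall i j : nat, (i <= 1)%nat -> (j <= 1)%nat -> 0 < p i j < 1) ->
  (forall i : nat, (i <= 1)%nat -> p i 0%nat + p i 1%nat = 1) ->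
  (* some entry differs from 1/2 *)
  (exists i j : nat, (i <= 1)%nat /\ (j <= 1)%nat /\ p i j <> / 2) ->
  (* the recurrence, for n >= 1, I_n^i ~ B(n, p_{i0}) *)
  (forall i n : nat, (i <= 1)%nat -> (1 <= n)%nat ->
     a i n = p i 0%nat * Ebin n (p i 0%nat) (fun k => a 0%nat k)
           + p i 1%nat * Ebin n (p i 0%nat) (fun k => a 1%nat (n - k)%nat)
           + eps i n) ->
  (* eps_i(n) = c_i + O(n^{-alpha}) *)
  0 < alpha ->
  (forall i : nat, (i <= 1)%nat ->
     exists M : R, exists N : nat, forall n : nat, (N <= n)%nat ->
       Rabs (eps i n - c i) <= M * Rpower (INR n) (- alpha)) ->
  (* conclusion: a_i(n) = (pi0 c0 + pi1 c1)/H log n + O(1) *)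
  forall i : nat, (i <= 1)%nat ->
    exists M : R, exists N : nat, forall n : nat, (N <= n)%nat ->
      Rabs (a i n - (pi0 p * c 0%nat + pi1 p * c 1%nat) / Hent p * ln (INR n)) <= M.
Proof.
  intros Hp Hsum _ Hrec Halpha Heps i Hi.
  set (L := (pi0 p * c 0%nat + pi1 p * c 1%nat) / Hent p).
  destruct (entropy_poisson_solution p Hp Hsum c) as [h Hh]; fold L in Hh.
  assert (Hmix : forall j n, (j <= 1)%nat -> (1 <= n)%nat -> a j n = mix p a j n + eps j n).
  { intros j n Hj Hn; rewrite (Hrec j n Hj Hn), (mix_reflect p Hsum a j n Hj); reflexivity. }
  destruct (recurrence_upper_bound p Hp Hsum L h c a eps alpha Hh Hmix Halpha Heps) as [A1 HA1].
  destruct (recurrence_upper_bound p Hp Hsum (- L) (fun j => - h j) (fun j => - c j)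
              (fun j n => - a j n) (fun j n => - eps j n) alpha) as [A2 HA2].
  - intros j Hj; specialize (Hh j Hj).
    transitivity (- (p j 0%nat * h 0%nat + p j 1%nat * h 1%nat - h j)); [ring | rewrite Hh; ring].
  - intros j n Hj Hn; rewrite mix_opp, (Hmix j n Hj Hn); ring.
  - exact Halpha.
  - intros j Hj; destruct (Heps j Hj) as [M [N HN]]; exists M, N; intros n Hn.
    replace (- eps j n - - c j) with (- (eps j n - c j)) by ring; rewrite Rabs_Ropp; auto.
  - exists (Rmax A1 A2), 0%nat; intros n _.
    specialize (HA1 i n Hi); specialize (HA2 i n Hi); cbv beta in HA2.
    pose proof (Rmax_l A1 A2); pose proof (Rmax_r A1 A2); apply Rabs_le; lra.
Qed.
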